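(* For every non negative integer $r \geq 0$, every tuning parameter $\lambda \geq 0$ and every data vector $y \in \mathbb{R}^n$, the boundary-point estimators at the last point $n$ are well defined, i.e. $$\max_{J \in \mathcal{I}: n \in J} \min_{I \in \mathcal{I}: n \in I, I \subseteq J} \Big[(P^{(|I|,r)} y_{I})_n + \frac{\lambda C_{I,J}}{|I|}\Big] \leq \min_{J \in \mathcal{I}: n \in J} \max_{I \in \mathcal{I}: n \in I, I \subseteq J} \Big[(P^{(|I|,r)} y_{I})_n - \frac{\lambda C_{I,J}}{|I|}\Big],$$ and likewise for the dyadic version $$\max_{J \in \mathcal{D}_n} \min_{I \in \mathcal{D}_n: I \subseteq J} \Big[(P^{(|I|,r)} y_{I})_n + \frac{\lambda C_{I,J}}{|I|}\Big] \leq \min_{J \in \mathcal{D}_n} \max_{I \in \mathcal{D}_n: I \subseteq J} \Big[(P^{(|I|,r)} y_{I})_n - \frac{\lambda C_{I,J}}{|I|}\Big].$$ Hence any value $\hat{\theta}^{(r,\lambda)}_n$ (resp. $\hat{\theta}^{(dyad,r,\lambda)}_n$) lying between the left and right hand sides exists. The proof is similar to that of the well-posedness of (interior) Minmax Trend Filtering.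
   Context: Data $y \in \mathbb{R}^n$. $\mathcal{I}$ is the set of all discrete intervals $[a:b]=\{a,\dots,b\}$, $1 \le a \le b \le n$; $y_I$ is the restriction of $y$ to $I$. For an interval $I$, $P^{(|I|,r)}$ is the orthogonal projection matrix onto the subspace of vectors in $\mathbb{R}^{|I|}$ that are restrictions to $I$ of discrete polynomial vectors $(f(1/n),\dots,f(n/n))$ with $f$ a polynomial of degree $r$; $(P^{(|I|,r)} y_I)_n$ denotes the entry of the fitted local polynomial regression on $y_I$ at location $n$. Here all intervals considered contain the last point $n$, and $C_{I,J} = 1$ if $I \neq J$ and $C_{I,J} = -1$ if $I = J$. $\mathcal{D}_n$ is the set of dyadified intervals $[l:r]$ with $l \in \mathcal{L}_n$, $r \in \mathcal{R}_n$, where (identifying dyadic intervals of $[n]$ with nodes of a complete binary tree) $\mathcal{R}_n=\{n\}$ and $\mathcal{L}_n=\{l_0,l_1,\dots\}$ is built by $l_0 = n$ and, if $l_j \neq 1$ is the left end point of a dyadic interval at level $-j$: if that node is a right child, $l_{j+1}$ is the left end point of its parent; if it is a left child, $l_{j+1}$ is the left end point of the left neighbor of its parent; stop when $l_j=1$. *)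

From HB Require Import structures.
From mathcomp Require Import all_boot all_order all_algebra.
Set Implicit Arguments. Unset Strict Implicit. Unset Printing Implicit Defensive.
Import Order.TTheory GRing.Theory Num.Theory.
Local Open Scope ring_scope.

Section MinmaxDefs.
Variable R : realFieldType.

(* Maximum / minimum of a (nonempty) finite list of reals.  The default 0 on
   the empty list is never used in lemma8: all index lists are nonempty. *)
Definition seqmax (s : seq R) : R :=
  if s is x :: s' then foldr Num.max x s' else 0.
Definition seqmin (s : seq R) : R :=
  if s is x :: s' then foldr Num.min x s' else 0.

(* Data y in R^n, indexed 1..n; [yat y i] is y_i (1-based). *)
Definition yat (n : nat) (y : 'rV[R]_n) (i : nat) : R :=
  if insub i.-1 is Some j then y 0 j else 0.

(* All intervals considered contain the last point n, hence are of the form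
   [a:n] with 1 <= a <= n; they are represented by their left end point a.
   |[a:n]| = n - a + 1. *)

(* Design matrix of [a:n]: row j (j = 0..r), column k (k = 0..n-a) is
   ((a+k)/n)^j, so its row space is the set of restrictions to [a:n] of
   discrete polynomial vectors (f(1/n),...,f(n/n)), deg f <= r. *)
Definition design (r n a : nat) : 'M[R]_(r.+1, (n - a).+1) :=
  \matrix_(j < r.+1, k < (n - a).+1) (((a + k)%:R / n%:R) ^+ j).

Definition orth_proj (p m : nat) (X : 'M[R]_(p, m)) : 'M[R]_m :=
  proj_mx (<<X>>%MS) (kermx X^T).

(* (P^{(|I|,r)} y_I)_n for I = [a:n]: last entry of the projection of y_I. *)
Definition local_fit (r n : nat) (y : 'rV[R]_n) (a : nat) : R :=
  ((\row_(k < (n - a).+1) yat y (a + k)) *m orth_proj (design r n a))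
    0 ord_max.

(* C_{I,J} for I = [b:n], J = [a:n]. *)
Definition Cij (b a : nat) : R := if b == a then -1 else 1.

End MinmaxDefs.

Local Close Scope ring_scope.

(* Dyadic intervals at level
   -j are [m 2^j + 1 : (m+1) 2^j]; such a node with left end point l is a
   right child iff ((l-1) / 2^j) is odd.  l_0 = n; if l_j <> 1:
   right child  -> l_{j+1} = l_j - 2^j      (left end point of the parent)
   left child   -> l_{j+1} = l_j - 2^(j+1)  (left end point of the parent's
                                             left neighbour);
   stop when l_j = 1.  [fuel] bounds the number of steps (l strictly
   decreases, so fuel n suffices). *)
Fixpoint dyad_left_aux (fuel j l : nat) : seq nat :=
  l :: (if fuel is fuel'.+1 then
          if l == 1%N then [::]
          else dyad_left_aux fuel' j.+1
                 (if odd ((l - 1) %/ 2 ^ j) then l - 2 ^ j else l - 2 ^ j.+1)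
        else [::]).

Definition dyad_left (n : nat) : seq nat := dyad_left_aux n 0 n.

Arguments local_fit {R} r {n} y a.
Arguments Cij {R} b a.

(** For any two outer intervals [[a1:n]] and [[a2:n]] the smaller one,
    [[max a1 a2 : n]], is an admissible inner interval for both, and at that
    common interval the two penalties [lambda C_{I,J} / |I|] sum to a
    nonpositive number because [I] coincides with one of the two outer
    intervals.  Hence every inner minimum is below every inner maximum. *)

From mathcomp Require Import all_boot all_order all_algebra.
From mathcomp Require Import zify lra.
Import Order.TTheory GRing.Theory Num.Theory.
Local Open Scope ring_scope.

Section SeqExtrema.
Variable R : realFieldType.
Implicit Types (s : seq R) (x c : R).

Lemma le_seqmax s x : x \in s -> x <= seqmax s.
Proof.
case: s => [//|z s] /=; elim: s x => [|w s IH] x /=; first by rewrite inE => /eqP->.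
rewrite le_max !inE => /or3P[/eqP-> | /eqP-> | xs].
- by rewrite IH ?orbT ?mem_head.
- by rewrite lexx.
- by rewrite IH ?orbT // inE xs orbT.
Qed.

Lemma seqmin_le s x : x \in s -> seqmin s <= x.
Proof.
case: s => [//|z s] /=; elim: s x => [|w s IH] x /=; first by rewrite inE => /eqP->.
rewrite ge_min !inE => /or3P[/eqP-> | /eqP-> | xs].
- by rewrite IH ?orbT ?mem_head.
- by rewrite lexx.
- by rewrite IH ?orbT // inE xs orbT.
Qed.

Lemma seqmax_le s c : s != [::] -> {in s, forall x, x <= c} -> seqmax s <= c.
Proof.
case: s => [//|z s] _ /=; elim: s => [|w s IH] sc /=; first exact/sc/mem_head.
rewrite ge_max sc ?inE ?eqxx ?orbT //= IH // => x xs.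
by apply: sc; move: xs; rewrite !inE => /orP[->|->]; rewrite ?orbT.
Qed.

Lemma le_seqmin s c : s != [::] -> {in s, forall x, c <= x} -> c <= seqmin s.
Proof.
case: s => [//|z s] _ /=; elim: s => [|w s IH] cs /=; first exact/cs/mem_head.
rewrite le_min cs ?inE ?eqxx ?orbT //= IH // => x xs.
by apply: cs; move: xs; rewrite !inE => /orP[->|->]; rewrite ?orbT.
Qed.

Lemma maxmin_le_minmax (T U : eqType) (L : seq T) (S : T -> seq U)
    (F G : T -> U -> R) :
  L != [::] ->
  {in L &, forall a1 a2, exists b, [/\ b \in S a1, b \in S a2 & F a1 b <= G a2 b]} ->
  seqmax [seq seqmin [seq F a b | b <- S a] | a <- L] <=
  seqmin [seq seqmax [seq G a b | b <- S a] | a <- L].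
Proof.
move=> L0 common.
have map_nil (f : T -> R) : [seq f a | a <- L] != [::] by case: L L0 {common}.
apply: seqmax_le => // _ /mapP[a1 a1L ->].
apply: le_seqmin => // _ /mapP[a2 a2L ->].
have [b [b1 b2 Fb_le_Gb]] := common a1 a2 a1L a2L.
apply: le_trans (seqmin_le _ _ (map_f (F a1) b1)) _.
exact: le_trans Fb_le_Gb (le_seqmax _ _ (map_f (G a2) b2)).
Qed.

End SeqExtrema.

Section Wellposedness.
Variable R : realFieldType.

Lemma Cij_add_le0 (b a1 a2 : nat) :
  (b == a1) || (b == a2) -> Cij b a1 + Cij b a2 <= 0 :> R.
Proof. by rewrite /Cij; do 2 case: eqP => _ //=; lra. Qed.

Lemma penalty_le (x lambda k : R) (b a1 a2 : nat) :
  0 <= lambda -> 0 <= k -> (b == a1) || (b == a2) ->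
  x + lambda * Cij b a1 / k <= x - lambda * Cij b a2 / k.
Proof.
move=> lambda_ge0 k_ge0 /Cij_add_le0 C_le0.
have lk_ge0 : 0 <= lambda / k by rewrite divr_ge0.
rewrite lerD2l !(mulrAC lambda (Cij b _)) -subr_ge0 -opprD -mulrDr oppr_ge0 addrC.
exact: mulr_ge0_le0.
Qed.

Lemma boundary_minmax_wellposed (L : seq nat) (S : nat -> seq nat)
    (f k : nat -> R) (lambda : R) :
  L != [::] -> 0 <= lambda -> (forall b, 0 <= k b) ->
  {in L, forall a b, (b \in S a) = (a <= b)%N && (b \in L)} ->
  seqmax [seq seqmin [seq f b + lambda * Cij b a / k b | b <- S a] | a <- L] <=
  seqmin [seq seqmax [seq f b - lambda * Cij b a / k b | b <- S a] | a <- L].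
Proof.
move=> L0 lambda_ge0 k_ge0 memS; apply: maxmin_le_minmax => // a1 a2 a1L a2L.
have maxL : maxn a1 a2 \in L by case: leqP.
exists (maxn a1 a2); rewrite !memS ?leq_maxl ?leq_maxr ?maxL //.
by split=> //; apply: penalty_le => //; case: leqP; rewrite eqxx ?orbT.
Qed.

End Wellposedness.

Theorem lemma8 (R : realFieldType) (n : nat) (hn : (0 < n)%N) (r : nat)
    (lambda : R) (hl : 0 <= lambda) (y : 'rV[R]_n) :
  (* all intervals J = [a:n] containing n, sub-intervals I = [b:n], a <= b *)
  seqmax [seq seqmin [seq local_fit r y b + lambda * Cij b a / (n - b).+1%:R
                     | b <- iota a (n - a).+1]
         | a <- iota 1 n]
  <=
  seqmin [seq seqmax [seq local_fit r y b - lambda * Cij b a / (n - b).+1%:R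
                     | b <- iota a (n - a).+1]
         | a <- iota 1 n]
  /\
  (* dyadified intervals D_n = {[l:n] : l \in L_n} *)
  seqmax [seq seqmin [seq local_fit r y b + lambda * Cij b a / (n - b).+1%:R
                     | b <- dyad_left n & (a <= b)%N]
         | a <- dyad_left n]
  <=
  seqmin [seq seqmax [seq local_fit r y b - lambda * Cij b a / (n - b).+1%:R
                     | b <- dyad_left n & (a <= b)%N]
         | a <- dyad_left n].
Proof.
have k_ge0 (b : nat) : 0 <= (n - b).+1%:R :> R by rewrite ler0n.
split; apply: boundary_minmax_wellposed => //.
- by rewrite -size_eq0 size_iota -lt0n.
- by move=> a + b; rewrite !mem_iota; lia.
- by rewrite /dyad_left; case: (n).
- by move=> a _ b; rewrite mem_filter.
Qed.
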